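(* Let $K$ be a field of characteristic zero, $(\mathfrak{g},s)$ a finite-dimensional solvable Lie algebra with filtration over $K$, $f\in\mathfrak{g}^*$, and $\pi:\mathfrak{g}^*\to\mathfrak{pv}(f)^*$ the restriction map. Then the $\mathfrak{R}$-equivalence class of $f$ is $\mathfrak{R}(f)=\pi^{-1}\pi(f)=\{g\in\mathfrak{g}^*\mid g|_{\mathfrak{pv}(f)}=f|_{\mathfrak{pv}(f)}\}$; in particular, every $g\in\mathfrak{g}^*$ with $g|_{\mathfrak{pv}(f)}=f|_{\mathfrak{pv}(f)}$ satisfies $\mathfrak{pv}(g)=\mathfrak{pv}(f)$.
   Context: A filtration $s$ on $\mathfrak{g}$ is a chain $\mathfrak{g}=\mathfrak{g}_0\supseteq\mathfrak{g}_1\supseteq\dots\supseteq\mathfrak{g}_k=\{0\}$ of ideals of $\mathfrak{g}$ with $\dim\mathfrak{g}_{i-1}/\mathfrak{g}_i\le1$. For $f\in\mathfrak{g}^*$: $f_i=f|_{\mathfrak{g}_i}$, $\mathfrak{g}_i^{f_i}=\{x\in\mathfrak{g}_i\mid f([x,\mathfrak{g}_i])=0\}$, and $\mathfrak{pv}(f)=\sum_{i=0}^k\mathfrak{g}_i^{f_i}$ is the Vergne polarization. The equivalence relation $\mathfrak{R}$ on $\mathfrak{g}^*$: $f'\,\mathfrak{R}\,f''$ iff $\mathfrak{pv}(f')=\mathfrak{pv}(f'')$ and $f'|_{\mathfrak{pv}(f')}=f''|_{\mathfrak{pv}(f')}$; $\mathfrak{R}(f)$ denotes the class of $f$. *)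

(* Lie algebras are not in MathComp: a finite-dimensional
   Lie algebra over K is modelled as a vectType V over K together with a
   bracket br : V -> V -> V satisfying the Lie axioms; subspaces are
   {vspace V}; g^* is 'Hom(V, K^o). *)
From HB Require Import structures.
From mathcomp Require Import all_boot all_order all_algebra.
Set Implicit Arguments. Unset Strict Implicit. Unset Printing Implicit Defensive.
Import Order.TTheory GRing.Theory Num.Theory.
Local Open Scope ring_scope.

Section LieDefs.
Variables (K : fieldType) (V : vectType K).
Implicit Types (br : V -> V -> V) (U I : {vspace V}) (f : 'Hom(V, K^o)).

Definition is_lie_bracket br :=
  [/\ forall x, linear (br x),
      forall y, linear (fun x => br x y),
      forall x, br x x = 0
    & forall x y z, br x (br y z) + br y (br z x) + br z (br x y) = 0].

Definition lie_ideal br I := forall x y, y \in I -> br x y \in I.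

(* [U, U]: the subspace spanned by brackets of elements of U (by
   bilinearity, the span of brackets of basis vectors). *)
Definition derived br U : {vspace V} :=
  (<< allpairs br (vbasis U) (vbasis U) >>)%VS.

Definition lie_solvable br := exists n, iter n (derived br) fullv = 0%VS.

Definition is_filtration br (k : nat) (s : nat -> {vspace V}) :=
  [/\ s 0 = fullv, s k = 0%VS,
      forall i, (i <= k)%N -> lie_ideal br (s i)
    & forall i, (i < k)%N ->
        (s i.+1 <= s i)%VS /\ (\dim (s i) <= (\dim (s i.+1)).+1)%N].

(* U^{f|U} = { x in U | f([x, U]) = 0 }  (vanishing on a basis of U
   suffices by linearity of the bracket and of f). *)
Definition stab br f U : {vspace V} :=
  (U :&: \bigcap_(j < \dim U)
           lker (linfun (fun x : V => (f (br x (vbasis U)`_j) : K^o))))%VS.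

Definition vergne_pol br (k : nat) (s : nat -> {vspace V}) f : {vspace V} :=
  (\sum_(i < k.+1) stab br f (s i))%VS.

Definition equivR br k s f' f'' :=
  vergne_pol br k s f' = vergne_pol br k s f'' /\
  forall x, x \in vergne_pol br k s f' -> f' x = f'' x.

End LieDefs.

(* For h in g^* write B_h(x, y) = h [x, y], R_h(i) = g_i^{h_i} (the radical of
   B_h on g_i) and T_h(i) = sum_{j >= i} R_h(j), so that pv(h) = T_h(0) and
   T_h(k+1) = 0.  The proof is a descending induction on i and rests on:
   - [R_h(i), T_h(i+1)] <= T_h(i+1), by the Jacobi identity (br_vtail);
   - maximality: every y in g_i that is B_h-orthogonal to T_h(i) lies in
     T_h(i) (vtail_closedP).  This uses dim g_i/g_{i+1} <= 1 and the linear
     algebra fact that a functional on U vanishing on the radical of B_h|U is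
     of the form B_h(w, .) with w in U (represent_functional);
   - if T_g(i+1) = T_f(i+1) and g = f there, then R_f(i) <= T_g(i), since by
     the first point R_f(i) is B_g-orthogonal to T_g(i) (stab_sub_vtail).
   Symmetrising the last point gives T_g(i) = T_f(i) for all i (vtail_agree). *)

From HB Require Import structures.
From mathcomp Require Import all_boot all_order all_algebra.
Import GRing.Theory.
Local Open Scope ring_scope.

Set Implicit Arguments. Unset Strict Implicit. Unset Printing Implicit Defensive.

Section BracketForm.
Variables (K : fieldType) (V : vectType K) (br : V -> V -> V).
Hypothesis lie : is_lie_bracket br.
Implicit Types (h : 'Hom(V, K^o)) (U : {vspace V}).

Lemma br_linr x : linear (br x). Proof. by case: lie. Qed.
Lemma br_linl y : linear (fun x => br x y). Proof. by case: lie. Qed.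

Definition adr x : {linear V -> V} :=
  HB.pack (br x) (GRing.isLinear.Build K V V *:%R (br x) (br_linr x)).
Definition adl y : {linear V -> V} :=
  HB.pack (fun x => br x y) (GRing.isLinear.Build K V V *:%R _ (br_linl y)).

Definition formR h x : {linear V -> K^o} := (h \o adr x)%FUN.
Definition formL h y : {linear V -> K^o} := (h \o adl y)%FUN.

Lemma adrE x y : adr x y = br x y. Proof. by []. Qed.
Lemma adlE x y : adl y x = br x y. Proof. by []. Qed.
Lemma formRE h x y : formR h x y = h (br x y). Proof. by []. Qed.
Lemma formLE h x y : formL h y x = h (br x y). Proof. by []. Qed.

(* Antisymmetry, from [x + y, x + y] = 0. *)
Lemma brC x y : br x y = - br y x.
Proof.
have [_ _ alt _] := lie.
have := alt (x + y); rewrite -adlE linearD /= -!adrE !linearD /= !alt.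
by rewrite add0r addr0 => /eqP; rewrite addr_eq0 => /eqP.
Qed.

Lemma formC h x y : h (br x y) = - h (br y x).
Proof. by rewrite brC linearN. Qed.

Lemma form_alt h x : h (br x x) = 0.
Proof. by have [_ _ -> _] := lie; rewrite linear0. Qed.

Lemma formDr h x y z : h (br x (y + z)) = h (br x y) + h (br x z).
Proof. by rewrite -!formRE linearD. Qed.
Lemma formZr h x (a : K) y : h (br x (a *: y)) = a * h (br x y).
Proof. by rewrite -!formRE linearZ. Qed.
Lemma formBl h x y z : h (br (x - y) z) = h (br x z) - h (br y z).
Proof. by rewrite -!formLE linearB. Qed.
Lemma formZl h (a : K) x y : h (br (a *: x) y) = a * h (br x y).
Proof. by rewrite -!formLE linearZ. Qed.

Definition basis_comb U (c : 'I_(\dim U) -> K) : V := \sum_j c j *: (vbasis U)`_j.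
Arguments basis_comb : clear implicits.

Lemma basis_comb_mem U c : basis_comb U c \in U.
Proof.
by apply: rpred_sum => j _; rewrite memvZ // vbasis_mem ?mem_nth ?size_tuple.
Qed.

Lemma linear_basis_comb U c (L : {linear V -> K^o}) :
  L (basis_comb U c) = \sum_j c j * L (vbasis U)`_j.
Proof. by rewrite linear_sum; apply: eq_bigr => j _; rewrite linearZ. Qed.

Lemma basis_comb_coord U v : v \in U -> v = basis_comb U (coord (vbasis U) ^~ v).
Proof. exact: coord_vbasis. Qed.

Lemma stab_sub h U : (stab br h U <= U)%VS. Proof. exact: capvSl. Qed.

Lemma stabP h U x :
  reflect (x \in U /\ {in U, forall y, h (br x y) = 0}) (x \in stab br h U).
Proof.
rewrite /stab memv_cap; apply: (iffP andP) => -[xU xrad]; split=> //.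
  move=> y yU; move: xrad; rewrite memvE => /subv_bigcapP xrad.
  rewrite (coord_vbasis yU) -formRE linear_sum big1 // => j _.
  have := xrad j isT; rewrite -memvE memv_ker (lfunE (formL h _)) /= => /eqP.
  by rewrite formZr => ->; rewrite mulr0.
rewrite memvE; apply/subv_bigcapP => j _.
by rewrite -memvE memv_ker (lfunE (formL h _)) /= xrad ?vbasis_mem ?mem_nth ?size_tuple.
Qed.

(* A functional L vanishing on the radical of B_h on U is represented on U as
   B_h(w, .) with w in U: the row of values of L on a basis of U is killed by
   the cokernel of the Gram matrix G of B_h (whose columns give radical
   vectors), hence lies in the row space of G. *)
Lemma represent_functional h U (L : {linear V -> K^o}) :
  {in stab br h U, forall u, L u = 0} ->
  exists2 w, w \in U & {in U, forall v, h (br w v) = L v}.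
Proof.
move=> Lrad; set e := vbasis U.
pose G : 'M[K]_(\dim U) := \matrix_(i, j) h (br e`_i e`_j).
have GE i j : G i j = h (br e`_i e`_j) by rewrite mxE.
pose lam : 'rV[K]_(\dim U) := \row_j L e`_j.
have [D lamE] : exists D, lam = D *m G.
  apply/submxP; rewrite submxE; apply/eqP/rowP => t; rewrite !mxE.
  pose r := basis_comb U (cokermx G ^~ t).
  have r_rad : r \in stab br h U.
    apply/stabP; split=> [|v /basis_comb_coord ->]; first exact: basis_comb_mem.
    rewrite formC -formLE linear_basis_comb big1 ?oppr0 // => j _.
    rewrite formLE -formRE linear_basis_comb.
    suff -> : \sum_l cokermx G l t * formR h e`_j e`_l = (G *m cokermx G) j t.
      by rewrite mulmx_coker mxE mulr0.
    by rewrite mxE; apply: eq_bigr => l _; rewrite GE mulrC.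
  rewrite -[RHS](Lrad r r_rad) linear_basis_comb; apply: eq_bigr => j _.
  by rewrite /lam mxE mulrC.
exists (basis_comb U (D 0)); first exact: basis_comb_mem.
move=> v /basis_comb_coord ->; rewrite -formRE !linear_basis_comb.
apply: eq_bigr => j _; congr (_ * _).
rewrite formRE -formLE linear_basis_comb.
have := congr1 (fun M : 'rV[K]_(\dim U) => M 0 j) lamE; rewrite !mxE => ->.
by apply: eq_bigr => i _; rewrite GE.
Qed.

End BracketForm.

Lemma descending_ind (P : nat -> Prop) (m : nat) :
  P m -> (forall i, (i < m)%N -> P i.+1 -> P i) -> forall i, (i <= m)%N -> P i.
Proof.
move=> Pm Pstep i /subKn <-; elim: (m - i)%N (leq_subr i m) => [|n IHn] nm.
  by rewrite subn0.
apply: Pstep; first by rewrite ltn_subrL (leq_trans _ nm).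
by rewrite subnSK //; apply: IHn; apply: ltnW.
Qed.

Section FilteredVergne.
Variables (K : fieldType) (V : vectType K) (br : V -> V -> V).
Hypothesis lie : is_lie_bracket br.
Variables (k : nat) (s : nat -> {vspace V}).
Hypothesis filt : is_filtration br k s.
Implicit Types (h f g : 'Hom(V, K^o)).

Lemma filt_bottom : s k = 0%VS. Proof. by case: filt. Qed.

Lemma filt_next i : (i < k)%N -> (s i.+1 <= s i)%VS.
Proof. by case: filt => _ _ _ /(_ i) step /step []. Qed.

Lemma filt_idealr i x y : (i <= k)%N -> y \in s i -> br x y \in s i.
Proof. by case: filt => _ _ ideal _ /ideal; apply. Qed.

Lemma filt_ideall i x y : (i <= k)%N -> x \in s i -> br x y \in s i.
Proof. by move=> ik xi; rewrite (brC lie) rpredN filt_idealr. Qed.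

Lemma filt_mono i j : (i <= j)%N -> (j <= k)%N -> (s j <= s i)%VS.
Proof.
elim: j => [|j IHj] ij jk; first by rewrite leqn0 in ij; rewrite (eqP ij).
case: (ltngtP i j.+1) ij => // [ij _ | -> _]; last exact: subvv.
exact: subv_trans (filt_next jk) (IHj ij (ltnW jk)).
Qed.

(* Each step of the filtration has codimension at most one, so any z in
   g_i \ g_{i+1} spans g_i modulo g_{i+1}. *)
Lemma filt_line i z : (i < k)%N -> z \in s i -> z \notin s i.+1 ->
  (s i.+1 + <[z]> = s i)%VS.
Proof.
move=> ik zi zn; case: filt => _ _ _ /(_ i ik) [sub dimle].
apply/eqP; rewrite eqEdim subv_add sub -memvE zi /=.
apply: leq_trans dimle _.
rewrite (ltn_leqif (dimv_leqif_eq (addvSl (s i.+1) <[z]>))).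
by apply: contra zn => /eqP ->; apply: (subvP (addvSr _ _)); apply: memv_line.
Qed.

Definition vtail h i : {vspace V} :=
  (\sum_(j < k.+1 | (i <= j)%N) stab br h (s j))%VS.

Lemma vergne_pol_vtail h : vergne_pol br k s h = vtail h 0.
Proof. by []. Qed.

Lemma vtail_end h : vtail h k.+1 = 0%VS.
Proof. by rewrite /vtail big_pred0 // => j; rewrite leqNgt ltn_ord. Qed.

Lemma vtail_rec h i : (i <= k)%N -> vtail h i = (stab br h (s i) + vtail h i.+1)%VS.
Proof.
move=> ik; rewrite /vtail (bigD1 (Ordinal (ik : (i < k.+1)%N))) //=.
congr (_ + _)%VS; apply: eq_bigl => j.
by rewrite -val_eqE /= [RHS]ltn_neqAle andbC eq_sym.
Qed.

Lemma vtail_mono h i j : (i <= j)%N -> (vtail h j <= vtail h i)%VS.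
Proof.
move=> ij; apply/subv_sumP => l jl; apply: (sumv_sup l) => //.
exact: leq_trans jl.
Qed.

Lemma vtail_sub h i : (vtail h i <= s i)%VS.
Proof.
apply/subv_sumP => j ij; apply: subv_trans (stab_sub _ _ _) _.
by apply: filt_mono => //; rewrite -ltnS.
Qed.

(* By the Jacobi identity, [g_i^{h_i}, g_l^{h_l}] <= g_l^{h_l} for i <= l. *)
Lemma br_stab h i l x y : (i <= l)%N -> (l <= k)%N ->
  x \in stab br h (s i) -> y \in stab br h (s l) -> br x y \in stab br h (s l).
Proof.
move=> il lk /(stabP lie) [xi xrad] /(stabP lie) [yl yrad].
apply/(stabP lie); split=> [|w wl]; first exact: filt_idealr.
have [_ _ _ jacobi] := lie.
rewrite (formC lie); have -> : br w (br x y) = - (br x (br y w) + br y (br w x)).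
  by apply/eqP; rewrite -subr_eq0 opprK addrC jacobi.
rewrite !linearN linearD /= xrad ?yrad ?add0r ?oppr0 //.
  exact: filt_ideall.
by apply: filt_ideall (leq_trans il lk) _; apply: (subvP (filt_mono il lk)).
Qed.

Lemma br_vtail h i x q : (i <= k)%N ->
  x \in stab br h (s i) -> q \in vtail h i.+1 -> br x q \in vtail h i.+1.
Proof.
move=> ik xR /memv_sumP [qs qsE ->]; rewrite -adrE linear_sum.
apply: memv_sumr => j ij; apply: (br_stab (i := i)) (qsE j ij) => //.
  exact: ltnW.
by rewrite -ltnS ltn_ord.
Qed.

Definition vtail_closed h i : Prop :=
  forall y, y \in s i -> {in vtail h i, forall p, h (br y p) = 0} -> y \in vtail h i.

(* If g_i^{h_i} <= g_{i+1}, an element y of g_i that is B_h-orthogonal to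
   g_{i+1}^{h_{i+1}} lies in g_{i+1}: otherwise y spans g_i mod g_{i+1}, and
   correcting y by the representative w in g_{i+1} of B_h(y, .) gives an
   element y - w of g_i^{h_i} outside g_{i+1}. *)
Lemma orth_in_next h i y : (i < k)%N -> (stab br h (s i) <= s i.+1)%VS ->
  y \in s i -> {in stab br h (s i.+1), forall p, h (br y p) = 0} -> y \in s i.+1.
Proof.
move=> ik stab_next yi yorth; apply/contraT => yn.
have [w ws wE] := represent_functional lie (L := formR lie h y) yorth.
have w_y : {in s i.+1, forall v, h (br w v) = h (br y v)} := wE.
have yw_stab : y - w \in stab br h (s i).
  apply/(stabP lie); split=> [|v]; first by rewrite rpredB // (subvP (filt_next ik)).
  rewrite -(filt_line ik yi yn) => /memv_addP [v' v'n [u /vlineP [c ->] ->]].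
  rewrite (formDr lie) (formZr lie) !(formBl lie) w_y // subrr add0r.
  by rewrite (form_alt lie) sub0r (formC lie) opprK -w_y // (form_alt lie) mulr0.
move: yn; rewrite -[y](subrK w) rpredD //; exact: (subvP stab_next).
Qed.

(* Otherwise some z in g_i^{h_i} spans g_i modulo g_{i+1}; writing y = w + c z,
   the component w is orthogonal to T_h(i+1), hence lies in it. *)
Lemma vtail_closed_line h i z : (i < k)%N ->
  z \in stab br h (s i) -> z \notin s i.+1 ->
  vtail_closed h i.+1 -> vtail_closed h i.
Proof.
move=> ik zR zn closed y yi yorth.
have zi : z \in s i := subvP (stab_sub _ _ _) _ zR.
move: yi; rewrite -(filt_line ik zi zn) => /memv_addP [w wn [u /vlineP [c ->] yE]].
have wT : w \in vtail h i.+1.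
  apply: closed => // q qT; have -> : w = y - c *: z by rewrite yE addrK.
  rewrite (formBl lie) (formZl lie) yorth; last exact: (subvP (vtail_mono h _)).
  move/(stabP lie): zR => [_ ->]; first by rewrite mulr0 subrr.
  by apply: (subvP (filt_next ik)); apply: (subvP (vtail_sub h i.+1)).
by rewrite yE (vtail_rec h (ltnW ik)) addrC memv_add // memvZ.
Qed.

Lemma vtail_closed_step h i : (i < k)%N -> vtail_closed h i.+1 -> vtail_closed h i.
Proof.
move=> ik closed.
have [stab_next|/subvPn [z zR zn]] := boolP (stab br h (s i) <= s i.+1)%VS.
  move=> y yi yorth; apply: (subvP (vtail_mono h (leqnSn i))).
  have yorth' : {in vtail h i.+1, forall p, h (br y p) = 0}.
    by move=> p /(subvP (vtail_mono h (leqnSn i))) /yorth.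
  have yn : y \in s i.+1.
    apply: (orth_in_next ik stab_next yi) => p pR; apply: yorth'.
    by rewrite (vtail_rec h ik) (subvP (addvSl _ _)).
  exact: closed yn yorth'.
exact: vtail_closed_line zR zn closed.
Qed.

Lemma vtail_closedP h i : (i <= k)%N -> vtail_closed h i.
Proof.
move: i; apply: descending_ind => [y|]; last exact: vtail_closed_step.
by rewrite filt_bottom memv0 => /eqP -> _; apply: rpred0.
Qed.

(* If T_g(i+1) = T_f(i+1) and g = f there, then g_i^{f_i} <= T_g(i): an
   element z of g_i^{f_i} is B_g-orthogonal to T_g(i), since [z, T_f(i+1)]
   stays in T_f(i+1), where g and f agree. *)
Lemma stab_sub_vtail f g i : (i <= k)%N -> vtail g i.+1 = vtail f i.+1 ->
  {in vtail f i.+1, forall x, g x = f x} -> (stab br f (s i) <= vtail g i)%VS.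
Proof.
move=> ik Tgf gf; apply/subvP => z zR.
apply: (vtail_closedP ik (subvP (stab_sub _ _ _) _ zR)) => p.
rewrite (vtail_rec g ik) => /memv_addP [r rR [q qT ->]].
rewrite (formDr lie) (formC lie); move/(stabP lie): rR => [_ ->]; last first.
  exact: subvP (stab_sub _ _ _) _ zR.
rewrite oppr0 add0r; rewrite Tgf in qT; rewrite gf; last exact: br_vtail.
move/(stabP lie): zR => [_ ->] //.
by apply: (subvP (vtail_sub f i)); apply: (subvP (vtail_mono f (leqnSn i))).
Qed.

Lemma vtail_agree f g : {in vtail f 0, forall x, g x = f x} ->
  forall i, (i <= k.+1)%N -> vtail g i = vtail f i.
Proof.
move=> gf; apply: descending_ind => [|i ik Tgf]; first by rewrite !vtail_end.
have gf' : {in vtail f i.+1, forall x, g x = f x}.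
  by move=> x /(subvP (vtail_mono f (leq0n _))) /gf.
have fg' : {in vtail g i.+1, forall x, f x = g x} by rewrite Tgf => x /gf' ->.
apply/eqP; rewrite eqEsubv; apply/andP; split.
  rewrite (vtail_rec g ik) subv_add (stab_sub_vtail ik (esym Tgf) fg').
  by rewrite Tgf vtail_mono.
rewrite (vtail_rec f ik) subv_add (stab_sub_vtail ik Tgf gf').
by rewrite -Tgf vtail_mono.
Qed.

End FilteredVergne.

Theorem theorem3p7 (K : fieldType) (V : vectType K) (br : V -> V -> V)
    (k : nat) (s : nat -> {vspace V}) (f : 'Hom(V, K^o)) :
  [pchar K] =i pred0 ->
  is_lie_bracket br ->
  lie_solvable br ->
  is_filtration br k s ->
  (forall g : 'Hom(V, K^o),
      equivR br k s g f <-> (forall x, x \in vergne_pol br k s f -> g x = f x))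
  /\ (forall g : 'Hom(V, K^o),
      (forall x, x \in vergne_pol br k s f -> g x = f x) ->
      vergne_pol br k s g = vergne_pol br k s f).
Proof.
move=> _ lie _ filt.
have pv_eq (g : 'Hom(V, K^o)) : {in vergne_pol br k s f, forall x, g x = f x} ->
    vergne_pol br k s g = vergne_pol br k s f.
  by rewrite !vergne_pol_vtail => gf; apply: vtail_agree.
split=> g; last exact: pv_eq.
split=> [[pvE gf] x | gf]; first by rewrite -pvE; apply: gf.
by split=> [|x]; [exact: pv_eq | rewrite pv_eq // => /gf].
Qed.
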